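(* A labeled finite-state automaton $\mathcal{S}=(Q,E,\delta,Q_0,\Sigma,\ell)$ is initial-state opaque with respect to $Q_S\subset Q$ if and only if $Q_0\ne\emptyset \implies Q_0\not\subset Q_S$ and, for every $q_0\in Q_0\cap Q_S$, in the concurrent composition $\mathrm{CC}(\mathcal{S}_{\varepsilon},\mathcal{S}_{\mathrm{obs}}^{\varepsilon})$ all states reachable from $(q_0,\mathrm{UR}(Q_0\setminus Q_S))$ are of the form $(-,x)$ with $x\ne\emptyset$.
   Context: A labeled finite-state automaton (LFSA) $\mathcal{S}=(Q,E,\delta,Q_0,\Sigma,\ell)$ has finite state set $Q$, finite event alphabet $E$, transition relation $\delta\subset Q\times E\times Q$ (extended to event sequences), initial states $Q_0\subset Q$, output alphabet $\Sigma$, and labeling $\ell:E\to\Sigma\cup\{\epsilon\}$ (extended to sequences). Observable events $E_o=\{e:\ell(e)\in\Sigma\}$, unobservable events $E_{uo}=\{e:\ell(e)=\epsilon\}$. For $x\subset Q$, the unobservable reach is $\mathrm{UR}(x)=\bigcup_{q\in x}\bigcup_{s\in E_{uo}^*}\delta(q,s)$. $\mathcal{S}$ is initial-state opaque (ISO) with respect to secret states $Q_S\subset Q$ if for every run $q_0\xrightarrow{s}q$ with $q_0\in Q_0\cap Q_S$ there is a run $q_0'\xrightarrow{s'}q'$ with $q_0'\in Q_0\setminus Q_S$ and $\ell(s)=\ell(s')$. The observer $\mathcal{S}_{\mathrm{obs}}$ is the deterministic automaton with state set $2^Q$, alphabet $\ell(E_o)$, initial state $\mathrm{UR}(Q_0)$,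 and transitions $\delta_{\mathrm{obs}}(x,a)=\bigcup_{q\in x}\bigcup_{e_a\in E_o,\ell(e_a)=a,\ s\in E_{uo}^*}\delta(q,e_as)$ (so $\delta_{\mathrm{obs}}(\emptyset,a)=\emptyset$). $\mathcal{S}_{\varepsilon}$ is obtained from $\mathcal{S}$ by relabeling each transition $q\xrightarrow{e}q'$ as $q\xrightarrow{\ell(e)}q'$ if $e\in E_o$ and as $q\xrightarrow{\varepsilon}q'$ if $e\in E_{uo}$, with labeling $\ell'$ on $\ell(E_o)\cup\{\varepsilon\}$ being the identity on $\ell(E_o)$ and $\ell'(\varepsilon)=\epsilon$. $\mathcal{S}_{\mathrm{obs}}^{\varepsilon}$ is $\mathcal{S}_{\mathrm{obs}}$ with the additional (unused) event $\varepsilon$ and labeling $\ell'$. The concurrent composition $\mathrm{CC}(\mathcal{S}^1,\mathcal{S}^2)$ of two LFSAs $\mathcal{S}^i=(Q_i,E,\delta_i,Q_{0i},\Sigma,\ell)$ has states $Q_1\times Q_2$, initial states $Q_{01}\times Q_{02}$, and transitions: $((q_1,q_1'),(e,e'),(q_2,q_2'))$ for observable $e,e'$ with $\ell(e)=\ell(e')$, $(q_1,e,q_2)\in\delta_1$, $(q_1',e',q_2')\in\delta_2$; $((q_1,q_1'),(e,\epsilon),(q_2,q_1'))$ for unobservable $e$ with $(q_1,e,q_2)\in\delta_1$; and $((q_1,q_1'),(\epsilon,e),(q_1,q_2'))$ for unobservable $e$ with $(q_1',e,q_2')\in\delta_2$. Observable transitions with the same label are synchronized, unobservable ones interleave. 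*)

From mathcomp Require Import all_boot.
Set Implicit Arguments. Unset Strict Implicit. Unset Printing Implicit Defensive.

(* An LFSA (Q, E, delta, Q0, Sigma, ell) is given by its components:
   Q E Sigma : finType, delta : Q -> E -> Q -> bool (transition relation),
   Q0 : {set Q}, ell : E -> option Sigma  (None stands for the empty word,
   i.e. ell e = None  <->  e is unobservable). *)

Section LFSA.
Variables (Sigma Q E : finType).

Fixpoint run (delta : Q -> E -> Q -> bool) (q : Q) (s : seq E) (q' : Q) : Prop :=
  match s with
  | [::] => q = q'
  | e :: s' => exists q1, delta q e q1 /\ run delta q1 s' q'
  end.

Definition lab_seq (ell : E -> option Sigma) (s : seq E) : seq Sigma := pmap ell s.

Definition ISO (delta : Q -> E -> Q -> bool) (Q0 QS : {set Q})
  (ell : E -> option Sigma) : Prop :=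
  forall q0 s q, q0 \in Q0 :&: QS -> run delta q0 s q ->
    exists q0' s' q', q0' \in Q0 :\: QS /\ run delta q0' s' q' /\
                      lab_seq ell s = lab_seq ell s'.

Variables (delta : Q -> E -> Q -> bool) (ell : E -> option Sigma).

Definition uo_step : rel Q := fun q q' => [exists e, (ell e == None) && delta q e q'].

Definition UR (x : {set Q}) : {set Q} :=
  [set q' | [exists q in x, connect uo_step q q']].

Definition obs_trans (x : {set Q}) (a : Sigma) : {set Q} :=
  [set q' | [exists q in x, [exists e, [exists q1,
     [&& ell e == Some a, delta q e q1 & connect uo_step q1 q']]]]].

(* S_eps: states Q, events option Sigma (None = varepsilon), labeling id. *)
Definition eps_trans (q : Q) (a : option Sigma) (q' : Q) : bool :=
  [exists e, (ell e == a) && delta q e q'].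

(* S_obs^eps: states {set Q}, events option Sigma, varepsilon unused,
   labeling id. *)
Definition obs_eps_trans (x : {set Q}) (a : option Sigma) (y : {set Q}) : bool :=
  if a is Some b then y == obs_trans x b else false.

End LFSA.

(* Concurrent composition of two LFSAs over the same events E and labeling ell.
   Events of CC are pairs (e,e'), (e,eps), (eps,e) encoded in option E * option E. *)
Definition CC_trans (Sigma Q1 Q2 E : finType) (d1 : Q1 -> E -> Q1 -> bool)
  (d2 : Q2 -> E -> Q2 -> bool) (ell : E -> option Sigma)
  (p : Q1 * Q2) (ev : option E * option E) (p' : Q1 * Q2) : bool :=
  match ev with
  | (Some e, Some e') =>
      [&& ell e != None, ell e == ell e', d1 p.1 e p'.1 & d2 p.2 e' p'.2]
  | (Some e, None) => [&& ell e == None, d1 p.1 e p'.1 & p'.2 == p.2]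
  | (None, Some e) => [&& ell e == None, p'.1 == p.1 & d2 p.2 e p'.2]
  | (None, None) => false
  end.

Lemma uo_connectP (Sigma Q E : finType) (delta : Q -> E -> Q -> bool)
  (ell : E -> option Sigma) (q q' : Q) :
  connect (uo_step delta ell) q q' <->
  exists s, all (fun e => ell e == None) s /\ run delta q s q'.
Proof.
split.
- case/connectP=> p; elim: p q => [|q1 p IH] q /=.
    by move=> _ ->; exists [::].
  case/andP=> /existsP[e /andP[He Hd]] Hp Hl.
  have [s [Hs Hr]] := IH q1 Hp Hl.
  by exists (e :: s); split; [rewrite /= He | exists q1].
- case=> s []; elim: s q => [|e s IH] q /=; first by move=> _ ->.
  case/andP=> He Hs [q1 [Hd Hr]].
  apply: connect_trans (IH q1 Hs Hr).
  by apply: connect1; apply/existsP; exists e; rewrite He.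
Qed.

(* Starting from UR(Q0 \ QS), the observer reaches after an observation w exactly
   the states reached by some run of S from a non-secret initial state that
   produces w.  In CC(S_eps, S_obs^eps) the first component follows an arbitrary
   run of S and the second one the observer along the observation of that run,
   so ISO says precisely that the second component never becomes empty.  The
   first condition is ISO for the empty run; the converse does not need it. *)
From mathcomp Require Import all_boot.

Set Implicit Arguments.
Unset Strict Implicit.
Unset Printing Implicit Defensive.

Section Runs.
Variables (Sigma Q E : finType).
Implicit Types (d : Q -> E -> Q -> bool) (ell : E -> option Sigma) (s : seq E).

Lemma run_cat d q s1 m s2 q' :
  run d q s1 m -> run d m s2 q' -> run d q (s1 ++ s2) q'.
Proof.
elim: s1 q => [|e s1 IH] q /=; first by move->.
by case=> q1 [Hd Hr] Hr2; exists q1; split; last exact: IH Hr Hr2.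
Qed.

Lemma lab_seq_cons ell e s :
  lab_seq ell (e :: s) =
  if ell e is Some a then a :: lab_seq ell s else lab_seq ell s.
Proof. by []. Qed.

Lemma lab_seq_cat ell s1 s2 :
  lab_seq ell (s1 ++ s2) = lab_seq ell s1 ++ lab_seq ell s2.
Proof. exact: pmap_cat. Qed.

Lemma lab_seq_uo ell s : all (fun e => ell e == None) s -> lab_seq ell s = [::].
Proof. by elim: s => // e s IH /andP[/eqP He /IH]; rewrite lab_seq_cons He. Qed.

End Runs.

Section Observer.
Variables (Sigma Q E : finType) (delta : Q -> E -> Q -> bool).
Variable ell : E -> option Sigma.
Implicit Types (x : {set Q}) (s : seq E) (w : seq Sigma).

Definition obs_reach x w : {set Q} := foldl (obs_trans delta ell) x w.

Definition uo_closed x : Prop :=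
  forall q q', q \in x -> uo_step delta ell q q' -> q' \in x.

Lemma UR_uo_closed x : uo_closed (UR delta ell x).
Proof.
move=> q q'; rewrite !inE => /existsP[q0 /andP[Hq0 Hc]] Hs.
by apply/existsP; exists q0; rewrite Hq0 (connect_trans Hc (connect1 Hs)).
Qed.

Lemma obs_trans_uo_closed x a : uo_closed (obs_trans delta ell x a).
Proof.
move=> q q'; rewrite !inE => /existsP[q0 /andP[Hq0 /existsP[e /existsP[q1]]]].
case/and3P=> He Hd Hc Hs; apply/existsP; exists q0; rewrite Hq0.
apply/existsP; exists e; apply/existsP; exists q1.
by rewrite He Hd (connect_trans Hc (connect1 Hs)).
Qed.

Lemma obs_trans_step x a q e q1 :
  q \in x -> ell e = Some a -> delta q e q1 -> q1 \in obs_trans delta ell x a.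
Proof.
move=> Hq He Hd; rewrite inE; apply/existsP; exists q; rewrite Hq.
by apply/existsP; exists e; apply/existsP; exists q1; rewrite He eqxx Hd connect0.
Qed.

Lemma run_obs_reach x q s q' :
  uo_closed x -> q \in x -> run delta q s q' ->
  q' \in obs_reach x (lab_seq ell s).
Proof.
elim: s x q => [|e s IH] x q Hx Hq; first by move=> /= <-.
case=> q1 [Hd Hr]; rewrite lab_seq_cons; case He: (ell e) => [a|] /=.
  exact: IH _ _ (@obs_trans_uo_closed x a) (obs_trans_step Hq He Hd) Hr.
by apply: IH Hx (Hx _ _ Hq _) Hr; apply/existsP; exists e; rewrite He eqxx.
Qed.

Lemma obs_reach_run x w q' :
  q' \in obs_reach x w ->
  exists q s, [/\ q \in x, run delta q s q' & lab_seq ell s = w].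
Proof.
elim: w x => [|a w IH] x /=; first by exists q', [::].
case/IH=> q1 [s [Hq1 Hr <-]].
move: Hq1; rewrite inE => /existsP[q /andP[Hq /existsP[e /existsP[qe]]]].
case/and3P=> /eqP He Hd /uo_connectP[u [Hu Hru]].
exists q, (e :: u ++ s); split=> //; first by exists qe; split; last exact: run_cat Hru Hr.
by rewrite lab_seq_cons He lab_seq_cat lab_seq_uo.
Qed.

Lemma mem_obs_reach_UR x w q' :
  q' \in obs_reach (UR delta ell x) w <->
  exists q s, [/\ q \in x, run delta q s q' & lab_seq ell s = w].
Proof.
split.
  case/obs_reach_run=> q1 [s [+ Hr <-]].
  rewrite inE => /existsP[q /andP[Hq /uo_connectP[u [Hu Hru]]]].
  exists q, (u ++ s); split=> //; first exact: run_cat Hru Hr.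
  by rewrite lab_seq_cat lab_seq_uo.
case=> q [s [Hq Hr <-]]; apply: run_obs_reach (@UR_uo_closed x) _ Hr.
by rewrite inE; apply/existsP; exists q; rewrite Hq connect0.
Qed.

Lemma ISO_obsP Q0 QS :
  ISO delta Q0 QS ell <->
  forall q0 s q, q0 \in Q0 :&: QS -> run delta q0 s q ->
    obs_reach (UR delta ell (Q0 :\: QS)) (lab_seq ell s) != set0.
Proof.
split=> [iso q0 s q Hq0 Hr | obs q0 s q Hq0 Hr].
  have [q0' [s' [q' [Hq0' [Hr' ->]]]]] := iso q0 s q Hq0 Hr.
  by apply/set0Pn; exists q'; apply/mem_obs_reach_UR; exists q0', s'.
have /set0Pn[q' /mem_obs_reach_UR[q0' [s' [Hq0' Hr' Hlab]]]] := obs q0 s q Hq0 Hr.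
by exists q0', s', q'.
Qed.

Local Notation CC_run :=
  (run (CC_trans (eps_trans delta ell) (obs_eps_trans delta ell) id)).

Lemma CC_run_proj q x sc p :
  CC_run (q, x) sc p ->
  exists s, run delta q s p.1 /\ p.2 = obs_reach x (lab_seq ell s).
Proof.
elim: sc q x => [|ev sc IH] q x /=; first by move<-; exists [::].
case=> -[q1 x1] [Ht /IH[s [Hr ->]]].
case: ev Ht => [[[b|]|] [e'|]] //=.
- case/and3P=> /eqP <- /existsP[e /andP[/eqP He Hd]] /eqP ->.
  by exists (e :: s); split; [exists q1 | rewrite lab_seq_cons He].
- case/andP=> /existsP[e /andP[/eqP He Hd]] /eqP ->.
  by exists (e :: s); split; [exists q1 | rewrite lab_seq_cons He].
- by case/and3P=> /eqP ->.
Qed.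

Lemma CC_run_lift q x s q' :
  run delta q s q' ->
  exists sc, CC_run (q, x) sc (q', obs_reach x (lab_seq ell s)).
Proof.
elim: s q x => [|e s IH] q x; first by move=> /= ->; exists [::].
case=> q1 [Hd Hr]; rewrite lab_seq_cons.
have Heps a : ell e = a -> eps_trans delta ell q a q1.
  by move=> He; apply/existsP; exists e; rewrite He eqxx Hd.
case He: (ell e) => [a|].
  have [sc Hsc] := IH q1 (obs_trans delta ell x a) Hr.
  exists ((Some (Some a), Some (Some a)) :: sc), (q1, obs_trans delta ell x a).
  by rewrite /= Heps // /obs_eps_trans !eqxx.
have [sc Hsc] := IH q1 x Hr.
by exists ((Some None, None) :: sc), (q1, x); rewrite /= Heps // !eqxx.
Qed.

End Observer.

Theorem theorem5 (Sigma Q E : finType) (delta : Q -> E -> Q -> bool)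
  (Q0 QS : {set Q}) (ell : E -> option Sigma) :
  ISO delta Q0 QS ell <->
  ((Q0 != set0 -> ~~ (Q0 \subset QS)) /\
   forall q0, q0 \in Q0 :&: QS ->
   forall (s : seq (option (option Sigma) * option (option Sigma)))
          (p : Q * {set Q}),
     run (CC_trans (eps_trans delta ell) (obs_eps_trans delta ell) id)
         (q0, UR delta ell (Q0 :\: QS)) s p ->
     p.2 != set0).
Proof.
split=> [/ISO_obsP obs | [_ cc]]; last first.
  apply/ISO_obsP=> q0 s q Hq0 Hr.
  by have [sc /(cc q0 Hq0)] := CC_run_lift ell (UR delta ell (Q0 :\: QS)) Hr.
split=> [/set0Pn[q Hq] | q0 Hq0 sc p /CC_run_proj[s [Hr ->]]]; last exact: obs Hr.
apply/negP=> Q0sub; have HqS : q \in Q0 :&: QS by rewrite inE Hq (subsetP Q0sub).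
have /set0Pn[q' /mem_obs_reach_UR[q0' [_ [Hq0' _ _]]]] := obs q [::] q HqS erefl.
by move: Hq0'; rewrite inE => /andP[/negP nQS /(subsetP Q0sub)].
Qed.
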